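(* Let $d\ge2$, $\gamma\ge2d$ and $v\in\Lambda_\gamma=\{0,\dots,\gamma-1\}^{\mathbb Z^d}$. The following are equivalent: (1) $v\in\mathcal R_\infty^{(\gamma)}$; (2) for every nonzero $h\in R_d$ with all coefficients in $\{0,1\}$, there is $\mathbf n\in\mathrm{supp}(h)$ with $(f^{(d,\gamma)}\cdot h)_{\mathbf n}+v_{\mathbf n}\ge\gamma$; (3) for every $h\in R_d$ having at least one positive coefficient, there is $\mathbf n$ with $h_{\mathbf n}>0$ and $(f^{(d,\gamma)}\cdot h)_{\mathbf n}+v_{\mathbf n}\ge\gamma$. Furthermore, if $v,v'\in\mathcal R_\infty^{(\gamma)}$ and $0\ne v-v'\in R_d$, then $v-v'\notin f^{(d,\gamma)}\cdot R_d$.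
   Context: $R_d=\mathbb Z[u_1^{\pm1},\dots,u_d^{\pm1}]$, identified with finitely supported integer sequences on $\mathbb Z^d$; $\mathrm{supp}(h)=\{\mathbf n:h_{\mathbf n}\ne0\}$; $(a\cdot b)_{\mathbf n}=\sum_{\mathbf k}a_{\mathbf k}b_{\mathbf n-\mathbf k}$. $f^{(d,\gamma)}=\gamma-\sum_{i=1}^d(u_i+u_i^{-1})$. For a nonempty $F\subset\mathbb Z^d$ and $\mathbf n\in F$, $\mathsf N_F(\mathbf n)=|F\cap\{\mathbf n\pm\mathbf e^{(i)}:i=1,\dots,d\}|$ ($\mathbf e^{(i)}$ the unit vectors). The sandpile model with parameter $\gamma$ is $\mathcal R^{(\gamma)}_\infty=\{v\in\Lambda_\gamma:$ for every finite nonempty $F\subset\mathbb Z^d$ there is $\mathbf n\in F$ with $v_{\mathbf n}\ge\mathsf N_F(\mathbf n)\}$ (the recurrent configurations). *)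

From HB Require Import structures.
From mathcomp Require Import all_boot all_order all_algebra.
Set Implicit Arguments. Unset Strict Implicit. Unset Printing Implicit Defensive.
Import Order.TTheory GRing.Theory Num.Theory.
Local Open Scope ring_scope.

Definition pt (d : nat) := 'rV[int]_d.

Definition e (d : nat) (i : 'I_d) : pt d := delta_mx 0 i.

(* Integer sequences on Z^d; an element of R_d is a finitely supported one. *)
Definition seqZ (d : nat) := pt d -> int.

Definition finsupp (d : nat) (h : seqZ d) : Prop :=
  exists s : seq (pt d), forall n, h n != 0 -> n \in s.

(* The product f^(d,gamma) * h, where f = gamma - sum_i (u_i + u_i^-1):
   (f*h)_n = sum_k f_k h_(n-k) = gamma h_n - sum_i (h_(n - e_i) + h_(n + e_i)). *)
Definition fmul (d : nat) (gamma : int) (h : seqZ d) : seqZ d :=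
  fun n => gamma * h n - \sum_(i < d) (h (n - e i) + h (n + e i)).

Definition inLambda (d : nat) (gamma : int) (v : seqZ d) : Prop :=
  forall n, 0 <= v n < gamma.

Definition nbrs (d : nat) (n : pt d) : seq (pt d) :=
  [seq n + e i | i <- enum 'I_d] ++ [seq n - e i | i <- enum 'I_d].

Definition NF (d : nat) (F : seq (pt d)) (n : pt d) : nat :=
  size [seq m <- undup (nbrs n) | m \in F].

Definition recurrent (d : nat) (gamma : int) (v : seqZ d) : Prop :=
  inLambda gamma v /\
  forall F : seq (pt d), F != [::] ->
    exists2 n, n \in F & (NF F n)%:Z <= v n.

From HB Require Import structures.
From mathcomp Require Import all_boot all_order all_algebra.
Import Order.TTheory GRing.Theory Num.Theory.
Local Open Scope ring_scope.
Set Implicit Arguments. Unset Strict Implicit.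

(* Proposition 4.1: recurrence of a sandpile configuration v is tested by the
   products f^(d,gamma) * h.
   - For a finite set F, the indicator 1_F satisfies
     (f * 1_F)_n = gamma - N_F(n) on F, so condition (2) (or (3)) applied to
     indicators is exactly the defining condition of recurrence.
   - Conversely, for h with a positive coefficient, let M > 0 be its maximal
     value and F the (finite, nonempty) level set {h = M}.  Then
     h <= (M - 1) + 1_F everywhere, so the neighbour sum of h at n is at most
     2d (M - 1) + N_F(n).  Recurrence gives n in F with N_F(n) <= v_n, and
     gamma >= 2d turns this into (f * h)_n + v_n >= gamma (Lemma
     allowed_fmul_ge).
   - Finally, if v - v' = f * g with g != 0, apply the previous lemma to g or
     to -g: it yields a site where v or v' reaches gamma, which is impossible
     in Lambda_gamma. *)

Definition allowed (d : nat) (v : seqZ d) : Prop :=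
  forall F : seq (pt d), F != [::] -> exists2 n, n \in F & (NF F n)%:Z <= v n.

Definition ind (d : nat) (F : seq (pt d)) : seqZ d := fun n => (n \in F)%:Z.

Lemma count_ord (d : nat) (p : pred 'I_d) :
  count p (Finite.enum 'I_d) = (\sum_(i < d) p i)%N.
Proof.
rewrite -enumT -sum1_count big_mkcond big_enum /=.
by apply: eq_bigr => i _; case: (p i).
Qed.

Lemma e_entry (d : nat) (i j : 'I_d) : e i 0 j = (i == j)%:R.
Proof. by rewrite /e mxE eqxx /= eq_sym. Qed.

Lemma e_inj (d : nat) : injective (@e d).
Proof. by move=> i j eij; have := e_entry i i; rewrite eij e_entry eqxx; case: eqP. Qed.

Lemma nbrs_uniq (d : nat) (n : pt d) : uniq (nbrs n).
Proof.
have inj_plus : injective (fun i => n + e i) by move=> i j /addrI /e_inj.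
have inj_minus : injective (fun i => n - e i) by move=> i j /addrI /oppr_inj /e_inj.
rewrite /nbrs cat_uniq (map_inj_uniq inj_plus) (map_inj_uniq inj_minus).
rewrite enum_uniq /= andbT; apply/hasPn => m /mapP [i _ ->].
apply/mapP => -[j _] /addrI eq_ij.
have := congr1 (fun M : pt d => M 0 i) eq_ij; rewrite /= mxE !e_entry eqxx.
by case: (j == i).
Qed.

Lemma NF_sum (d : nat) (F : seq (pt d)) (n : pt d) :
  (NF F n)%:Z = \sum_(i < d) ((n - e i \in F)%:Z + (n + e i \in F)%:Z).
Proof.
rewrite /NF undup_id ?nbrs_uniq // size_filter /nbrs count_cat !count_map.
rewrite !count_ord -(big_morph Posz PoszD (erefl 0%:Z)) -big_split /=.
by congr (Posz _); apply: eq_bigr => i _; rewrite addnC.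
Qed.

Lemma fmul_ind (d : nat) (g : int) (F : seq (pt d)) (n : pt d) :
  n \in F -> fmul g (ind F) n = g - (NF F n)%:Z.
Proof. by move=> nF; rewrite /fmul NF_sum /ind nF mulr1. Qed.

Lemma ind_neq0 (d : nat) (F : seq (pt d)) (n : pt d) : ind F n != 0 -> n \in F.
Proof. by rewrite /ind; case: (n \in F). Qed.

Lemma ind_finsupp (d : nat) (F : seq (pt d)) : finsupp (ind F).
Proof. by exists F => n /ind_neq0. Qed.

Lemma allowed_of_indicators (d : nat) (g : int) (v : seqZ d) :
  (forall F : seq (pt d), F != [::] ->
     exists2 n, n \in F & g <= fmul g (ind F) n + v n) ->
  allowed v.
Proof.
move=> test F F_nil; have [n nF le_g] := test F F_nil; exists n => //.
by move: le_g; rewrite fmul_ind // -addrA lerDl addrC subr_ge0.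
Qed.

Lemma exists_argmax (T : eqType) (f : T -> int) (s : seq T) :
  s != [::] -> exists2 x, x \in s & forall y, y \in s -> f y <= f x.
Proof.
elim: s => [//|a s IH] _; case: (eqVneq s [::]) => [-> | /IH [x xs max_x]].
  by exists a => [|y]; rewrite ?inE ?eqxx // => /eqP ->.
have [le_ax | lt_xa] := leP (f a) (f x).
  exists x => [|y]; first by rewrite inE xs orbT.
  by rewrite inE => /orP [/eqP -> // | /max_x].
exists a => [|y]; first by rewrite inE eqxx.
by rewrite inE => /orP [/eqP -> // | /max_x le_yx]; exact: le_trans le_yx (ltW lt_xa).
Qed.

Lemma top_level_set (d : nat) (h : seqZ d) :
  finsupp h -> (exists n, 0 < h n) ->
  exists M : int, exists2 F : seq (pt d), F != [::] &
    [/\ 0 < M, forall n, n \in F -> h n = M & forall m, h m <= M - 1 + ind F m].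
Proof.
move=> [s supp_s] [n0 pos_n0].
have n0s : n0 \in s by apply: supp_s; rewrite gt_eqF.
have s_nil : s != [::] by case: s supp_s n0s.
have [x xs max_x] := exists_argmax h s_nil.
have le_hx y : h y <= h x.
  case: (eqVneq (h y) 0) => [-> | /supp_s]; last exact: max_x.
  exact: le_trans (ltW pos_n0) (max_x _ n0s).
exists (h x), [seq y <- s | h y == h x].
  by apply/eqP => F0; have := mem_filter (fun y => h y == h x) x s; rewrite F0 xs eqxx.
have hx_pos : 0 < h x := lt_le_trans pos_n0 (le_hx n0).
split=> // [n|m]; first by rewrite mem_filter => /andP [/eqP].
rewrite /ind mem_filter; case: (eqVneq (h m) (h x)) => [eq_mx | ne_mx] /=.
  by rewrite supp_s ?eq_mx ?subrK // gt_eqF.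
by rewrite addr0 -ltzD1 subrK lt_neqAle ne_mx le_hx.
Qed.

Lemma nbr_sum_le (d : nat) (K : int) (F : seq (pt d)) (h : seqZ d) (n : pt d) :
  (forall m, h m <= K + ind F m) ->
  \sum_(i < d) (h (n - e i) + h (n + e i)) <= K *+ (2 * d) + (NF F n)%:Z.
Proof.
move=> le_h; apply: le_trans (ler_sum _ (fun i _ => lerD (le_h (n - e i)) (le_h (n + e i)))) _.
under eq_bigr do rewrite addrACA.
by rewrite big_split /= sumr_const card_ord NF_sum mulrnA mulr2n.
Qed.

Lemma allowed_fmul_ge (d : nat) (g : int) (v : seqZ d) :
  (2 * d)%:R <= g -> allowed v ->
  forall h : seqZ d, finsupp h -> (exists n, 0 < h n) ->
  exists2 n, 0 < h n & g <= fmul g h n + v n.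
Proof.
move=> le_2d_g allowed_v h supp_h pos_h.
have [M [F F_nil [M_pos hF le_h]]] := top_level_set supp_h pos_h.
have [n nF NF_le] := allowed_v F F_nil.
exists n; first by rewrite hF.
have K_ge0 : 0 <= M - 1 by rewrite subr_ge0 -(add0r 1) lezD1.
have le_2dK : (M - 1) *+ (2 * d) <= (M - 1) * g by rewrite -mulr_natr ler_wpM2l.
have le_nbr_sum := le_trans (nbr_sum_le n le_h) (lerD le_2dK NF_le).
have -> : fmul g h n = (M - 1) * g + g - \sum_(i < d) (h (n - e i) + h (n + e i)).
  by rewrite /fmul (hF n nF) mulrBl mul1r subrK mulrC.
by rewrite [_ + g]addrC -!addrA lerDl addrCA addrC subr_ge0.
Qed.

Lemma fmul_opp (d : nat) (g : int) (h : seqZ d) (n : pt d) :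
  fmul g (fun m => - h m) n = - fmul g h n.
Proof.
rewrite /fmul (eq_bigr (fun i => - (h (n - e i) + h (n + e i)))) => [|i _].
  by rewrite sumrN mulrN opprD.
by rewrite opprD.
Qed.

(* If v is in Lambda_g and v' is allowed, then v - v' is not f * h for any
   h with a positive value: the estimate would force v_n >= g. *)
Lemma no_positive_fmul_difference (d : nat) (g : int) (v v' h : seqZ d) :
  (2 * d)%:R <= g -> inLambda g v -> allowed v' ->
  finsupp h -> (exists n, 0 < h n) ->
  ~ (forall n, v n - v' n = fmul g h n).
Proof.
move=> le_2d_g v_Lambda allowed_v' supp_h pos_h diff_eq.
have [n _] := allowed_fmul_ge le_2d_g allowed_v' supp_h pos_h.
by rewrite -diff_eq subrK; have /andP [_ lt_vg] := v_Lambda n; rewrite leNgt lt_vg.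
Qed.

Lemma recurrent_diff_not_fmul (d : nat) (g : int) (v v' : seqZ d) :
  (2 * d)%:R <= g -> recurrent g v -> recurrent g v' ->
  (exists n, v n - v' n != 0) ->
  ~ (exists2 h : seqZ d, finsupp h & forall n, v n - v' n = fmul g h n).
Proof.
move=> le_2d_g [v_Lambda allowed_v] [v'_Lambda allowed_v'] [n0 ne0] [h [s supp_s] diff_eq].
have supp_h : finsupp h by exists s.
have [/hasP [n1 _ h_n1] | /hasPn h_zero] := boolP (has (fun n => h n != 0) s).
  have [h_neg | h_pos] := ltP (h n1) 0; last first.
    have pos_h : exists n, 0 < h n by exists n1; rewrite lt_neqAle eq_sym h_n1.
    exact: no_positive_fmul_difference le_2d_g v_Lambda allowed_v' supp_h pos_h diff_eq.
  have supp_opp : finsupp (fun m => - h m) by exists s => n; rewrite oppr_eq0; apply: supp_s.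
  have pos_opp : exists n, 0 < - h n by exists n1; rewrite oppr_gt0.
  apply: (no_positive_fmul_difference le_2d_g v'_Lambda allowed_v supp_opp pos_opp).
  by move=> n; rewrite fmul_opp -diff_eq opprB.
have h0 n : h n = 0.
  by case: (eqVneq (h n) 0) => // hn; have := h_zero n (supp_s n hn); rewrite hn.
by move: ne0; rewrite diff_eq /fmul h0 mulr0 big1 ?subrr ?eqxx // => i _; rewrite !h0.
Qed.

Theorem proposition4p1 (d : nat) (gamma : nat) :
  (2 <= d)%N -> (2 * d <= gamma)%N ->
  (forall v : seqZ d, inLambda gamma%:Z v ->
     (recurrent gamma%:Z v <->
      (forall h : seqZ d, finsupp h ->
         (forall n, h n = 0 \/ h n = 1) -> (exists n, h n != 0) ->
         exists2 n, h n != 0 & gamma%:Z <= fmul gamma%:Z h n + v n))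
   /\ (recurrent gamma%:Z v <->
      (forall h : seqZ d, finsupp h -> (exists n, 0 < h n) ->
         exists2 n, 0 < h n & gamma%:Z <= fmul gamma%:Z h n + v n)))
  /\
  (forall v v' : seqZ d, recurrent gamma%:Z v -> recurrent gamma%:Z v' ->
     finsupp (fun n => v n - v' n) -> (exists n, v n - v' n != 0) ->
     ~ (exists2 g : seqZ d, finsupp g &
          forall n, v n - v' n = fmul gamma%:Z g n)).
Proof.
move=> _ le_2d_gamma; have le_2d_g : (2 * d)%:R <= gamma%:Z by rewrite natz lez_nat.
have nonempty_ind F : F != [::] -> exists a, ind F a = 1.
  by case: F => // a F _; exists a; rewrite /ind inE eqxx.
split=> [v v_Lambda | v v' rec_v rec_v' _]; last exact: recurrent_diff_not_fmul.
split; split=> [[_ allowed_v] | test].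
- move=> h supp_h h01 [n0 h_n0].
  have pos_h : exists n, 0 < h n by exists n0; case: (h01 n0) h_n0 => ->.
  have [n pos_n ge_n] := allowed_fmul_ge le_2d_g allowed_v supp_h pos_h.
  by exists n; rewrite ?gt_eqF.
- split=> //; apply: (allowed_of_indicators (g := gamma%:Z)) => F /nonempty_ind [a ind_a].
  have ind01 n : ind F n = 0 \/ ind F n = 1 by rewrite /ind; case: (n \in F); [right | left].
  have ind_nz : exists n, ind F n != 0 by exists a; rewrite ind_a.
  have [n /ind_neq0 nF ge_n] := test (ind F) (ind_finsupp F) ind01 ind_nz.
  by exists n.
- exact: allowed_fmul_ge.
- split=> //; apply: (allowed_of_indicators (g := gamma%:Z)) => F /nonempty_ind [a ind_a].
  have ind_pos : exists n, 0 < ind F n by exists a; rewrite ind_a.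
  have [n /lt0r_neq0/ind_neq0 nF ge_n] := test (ind F) (ind_finsupp F) ind_pos.
  by exists n.
Qed.
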